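(* Let $G$ be a totally disconnected, locally compact group, $g\in G$ and $U$ a compact open subgroup of $G$ such that the indices $|U:U\cap g^{-1}Ug|$ and $|U:U\cap gUg^{-1}|$ are coprime. Then $U$ is tidy for $g$ and $s(g)=|U:U\cap g^{-1}Ug|$.
   Context: The scale function of a totally disconnected, locally compact group $G$ is $s(g)=\min\{|U:U\cap g^{-1}Ug| : U \text{ a compact open subgroup of } G\}$. A compact open subgroup $U$ is tidy for $g$ if this minimum is attained at $U$. *)

From HB Require Import structures.
From mathcomp Require Import all_boot all_order monoid.
From mathcomp Require Import finmap all_classical all_reals topology.
Set Implicit Arguments. Unset Strict Implicit. Unset Printing Implicit Defensive.

Local Open Scope classical_set_scope.
Local Open Scope group_scope.

HB.mixin Record isTopologicalGroup G of Group G & Topological G := {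
  mul_continuous : continuous (fun p : G * G => p.1 * p.2);
  inv_continuous : continuous (fun x : G => x^-1)
}.

#[short(type="topGroupType")]
HB.structure Definition TopologicalGroup :=
  {G of Group G & Topological G & isTopologicalGroup G}.

Section TDLC.
Variable G : topGroupType.

Definition tdlc : Prop :=
  [/\ hausdorff_space G, locally_compact [set: G] & totally_disconnected [set: G]].

Definition is_subgroup (U : set G) : Prop :=
  [/\ U 1, (forall x y, U x -> U y -> U (x * y)) & (forall x, U x -> U x^-1)].

Definition compact_open_subgroup (U : set G) : Prop :=
  [/\ is_subgroup U, compact U & open U].

Definition conjset (U : set G) (g : G) : set G := [set g^-1 * u * g | u in U].

Definition lcoset (x : G) (V : set G) : set G := [set x * v | v in V].

(* index |U : V| = number of cosets x V with x in U (0 if infinitely many;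
   it is always finite when V is an open subgroup of a compact group U). *)
Definition subgroup_index (U V : set G) : nat :=
  #|` fset_set [set lcoset x V | x in U] |.

Definition displacement (g : G) (U : set G) : nat := subgroup_index U (setI U (conjset U g)).

(* scale function: the minimum of |U : U ∩ g^-1 U g| over compact open
   subgroups U (0 by convention if there is no compact open subgroup). *)
Definition scale_pred (g : G) (n : nat) : bool :=
  `[< exists U, compact_open_subgroup U /\ n = displacement g U >].

Definition scale (g : G) : nat :=
  match pselect (exists n, scale_pred g n) with
  | left h => ex_minn h
  | right _ => 0%N
  end.

Definition tidy (g : G) (U : set G) : Prop :=
  compact_open_subgroup U /\ displacement g U = scale g.

End TDLC.

From HB Require Import structures.
From mathcomp Require Import all_boot all_order monoid.
From mathcomp Require Import finmap all_classical all_reals topology.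
From mathcomp Require Import ring.
Set Implicit Arguments. Unset Strict Implicit. Unset Printing Implicit Defensive.
Local Open Scope classical_set_scope.
Local Open Scope group_scope.

(* Write |X : Y| for the index and d(X) = |X : X ∩ X^g|, d'(X) = |X : X ∩ X^(g^-1)|
   where X^g = g^-1 X g.  The proof is a counting argument on compact open
   subgroups, without any structure theory of tidy subgroups; it uses only that
   U is compact open, not that G is totally disconnected or locally compact.

   1. Tower law: |A : C| = |A : B| |B : C| for subgroups C <= B <= A with
      finitely many cosets of C in A.
   2. Cocycle identity: for compact open subgroups X, Y, Z, writing
      [X,Y] = |X : X ∩ Y|, one has [X,Y][Y,Z][Z,X] = [Y,X][Z,Y][X,Z]
      (apply the tower law to D = X ∩ Y ∩ Z inside each pair).
   3. Indices are invariant under conjugation; hence [X^g, X] = d'(X), and the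
      cocycle identity for (U, U^g, W^g) and (U, W, W^g) yields the invariance
      of the ratio d/d' (the modular function):  d(U) d'(W) = d'(U) d(W).
   4. Taking W at which s(g) = d(W) is attained: d(U) divides d'(U) d(W), and
      d(U) is coprime to d'(U), so d(U) divides s(g) <= d(U); thus s(g) = d(U). *)

Lemma card_fsetM (K K' : choiceType) (A : {fset K}) (E : {fset K'}) :
  (#|` (A `*` E)%fset| = #|` A| * #|` E|)%N.
Proof.
rewrite /fsetM (perm_size (enum_imfset2 _ _)) ?size_allpairs //.
by move=> [x y] [x' y'] /= _ _ [-> ->].
Qed.

Section Cosets.
Variable G : topGroupType.
Implicit Types (A B C X Y : set G) (x y z : G).

Definition cosets A B : set (set G) := [set lcoset x B | x in A].

Definition meet_index X Y : nat := subgroup_index X (X `&` Y).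

Lemma subgroup_indexE A B : subgroup_index A B = #|` fset_set (cosets A B)|.
Proof. by []. Qed.

Lemma lcoset_self x B : is_subgroup B -> lcoset x B x.
Proof. by case=> B1 _ _; exists 1 => //; rewrite mulg1. Qed.

Lemma lcoset_eq x y B : is_subgroup B -> lcoset x B y -> lcoset x B = lcoset y B.
Proof.
case=> B1 BM BV [b Bb <-]; apply/seteqP; split => z [c Bc <-].
  by exists (b^-1 * c); [apply: BM => //; apply: BV|rewrite mulgA mulgK].
by exists (b * c); [apply: BM|rewrite mulgA].
Qed.

Lemma lcoset_meet x y z B : is_subgroup B ->
  lcoset x B z -> lcoset y B z -> lcoset x B = lcoset y B.
Proof. by move=> sB xz yz; rewrite (lcoset_eq sB xz) (lcoset_eq sB yz). Qed.

Lemma lcoset_sub x A B : is_subgroup A -> B `<=` A -> A x -> lcoset x B `<=` A.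
Proof. by case=> _ AM _ BA Ax _ [b Bb <-]; apply: AM => //; apply: BA. Qed.

Lemma lcosetM x y C : lcoset x (lcoset y C) = lcoset (x * y) C.
Proof.
apply/seteqP; split => z.
  by move=> [_ [c Cc <-] <-]; exists c => //; rewrite mulgA.
by move=> [c Cc <-]; exists (y * c); [exists c|rewrite mulgA].
Qed.

Lemma lcoset_inj x Y Y' : lcoset x Y = lcoset x Y' -> Y = Y'.
Proof.
move=> e; apply/seteqP; split => z Yz.
  have : lcoset x Y' (x * z) by rewrite -e; exists z.
  by case=> z' Yz' /mulgI <-.
have : lcoset x Y (x * z) by rewrite e; exists z.
by case=> z' Yz' /mulgI <-.
Qed.

Definition rep X : G := xget 1 X.

Lemma rep_lcoset x B : is_subgroup B -> lcoset x B (rep (lcoset x B)).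
Proof. by move=> sB; apply: xgetI; apply: lcoset_self. Qed.

Lemma subgroupI A B : is_subgroup A -> is_subgroup B -> is_subgroup (A `&` B).
Proof.
case=> A1 AM AV [B1 BM BV]; split => //.
- by move=> x y [? ?] [? ?]; split; [apply: AM|apply: BM].
- by move=> x [? ?]; split; [apply: AV|apply: BV].
Qed.

(* a finite index is positive: the coset 1B always belongs to A/B *)
Lemma index_gt0 A B : is_subgroup A -> finite_set (cosets A B) ->
  (0 < subgroup_index A B)%N.
Proof.
case=> A1 _ _ fin; rewrite /subgroup_index cardfs_gt0; apply/fset0Pn.
by exists (lcoset 1 B); rewrite in_fset_set ?inE //; exists 1.
Qed.

Section TowerLaw.
Variables A B C : set G.
Hypotheses (sA : is_subgroup A) (sB : is_subgroup B) (sC : is_subgroup C).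
Hypotheses (BA : B `<=` A) (CB : C `<=` B).

Lemma cosets_coarsen : cosets A B = (fun X => lcoset (rep X) B) @` cosets A C.
Proof.
apply/seteqP; split => W.
  move=> [x Ax <-]; exists (lcoset x C); first by exists x.
  apply: esym; apply: lcoset_eq => //.
  by case: (rep_lcoset x sC) => c Cc <-; exists c => //; apply: CB.
move=> [_ [x Ax <-] <-]; exists (rep (lcoset x C)) => //.
by apply: (lcoset_sub sA _ Ax); [move=> ? /CB /BA|apply: rep_lcoset].
Qed.

Lemma rep_in_cosets X : cosets A B X -> A (rep X).
Proof. by move=> [x Ax <-]; apply: (lcoset_sub sA BA Ax); apply: rep_lcoset. Qed.

Lemma rep_mul_in_coset X y : cosets A B X -> B y -> X (rep X * y).
Proof.
move=> [x _ <-] By; case: (rep_lcoset x sB) => b Bb <-.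
by case: sB => _ BM _; exists (b * y); [apply: BM|rewrite mulgA].
Qed.

Definition pair_coset (p : set G * set G) : set G := lcoset (rep p.1) p.2.

Lemma cosets_pair : cosets A C = pair_coset @` (cosets A B `*` cosets B C).
Proof.
apply/seteqP; split => W.
  move=> [x Ax <-]; have [b Bb eb] := rep_lcoset x sB.
  exists (lcoset x B, lcoset b^-1 C).
    by split; [exists x|exists b^-1 => //; case: sB => _ _; apply].
  by rewrite /pair_coset /= lcosetM -eb mulgK.
move=> [[X _] /= [AX [y By <-]] <-]; rewrite /pair_coset /= lcosetM.
by exists (rep X * y) => //; case: sA => _ AM _; apply: AM (BA By); apply: rep_in_cosets.
Qed.

Lemma pair_coset_inj p q : (cosets A B `*` cosets B C) p ->
  (cosets A B `*` cosets B C) q -> pair_coset p = pair_coset q -> p = q.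
Proof.
case: p q => [X Y] [X' Y'] [/= AX [y By eY]] [/= AX' [y' By' eY']].
rewrite /pair_coset /= => e.
have XXy : X (rep X * y) by apply: rep_mul_in_coset.
have X'Xy : X' (rep X * y).
  have : lcoset (rep X') Y' (rep X * y) by rewrite -e -eY; exists y => //; apply: lcoset_self.
  case=> v Y'v <-; apply: rep_mul_in_coset AX' _.
  by apply: (lcoset_sub sB CB By'); rewrite eY'.
have eX : X = X'.
  by move: AX AX' XXy X'Xy => [x _ <-] [x' _ <-]; apply: lcoset_meet.
by move: e; rewrite eX => /lcoset_inj ->.
Qed.

Lemma index_mul : finite_set (cosets A C) ->
  subgroup_index A C = (subgroup_index A B * subgroup_index B C)%N.
Proof.
move=> finAC.
have finAB : finite_set (cosets A B) by rewrite cosets_coarsen; apply: finite_image.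
have finBC : finite_set (cosets B C).
  by apply: sub_finite_set finAC => _ [x Bx <-]; exists x => //; apply: BA.
have finABC := finite_setX finAB finBC.
rewrite !subgroup_indexE cosets_pair fset_set_image // card_in_imfset /=.
  by rewrite fset_setX // card_fsetM.
by move=> p q; rewrite !in_fset_set // !inE; apply: pair_coset_inj.
Qed.

End TowerLaw.

(* Comparing X and Y through a common subgroup D of finite index: by the
   tower law both sides equal |X : X ∩ Y| |Y : X ∩ Y| |X ∩ Y : D|. *)
Lemma meet_index_pair X Y D : is_subgroup X -> is_subgroup Y -> is_subgroup D ->
  D `<=` X `&` Y -> finite_set (cosets X D) -> finite_set (cosets Y D) ->
  (meet_index X Y * subgroup_index Y D = meet_index Y X * subgroup_index X D)%N.
Proof.
move=> sX sY sD DXY fX fY.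
have DYX : D `<=` Y `&` X by rewrite setIC.
rewrite (index_mul sX (subgroupI sX sY) sD (fun _ => @proj1 _ _) DXY fX).
rewrite (index_mul sY (subgroupI sY sX) sD (fun _ => @proj1 _ _) DYX fY).
by rewrite /meet_index [Y `&` X]setIC; ring.
Qed.

End Cosets.

Section Conjugation.
Variable G : topGroupType.
Implicit Types (X Y : set G) (g x z : G).

Lemma conjsetE X g z : conjset X g z <-> X (g * z * g^-1).
Proof.
split; first by move=> [u Xu <-]; rewrite !mulgA mulgV mul1g mulgK.
by move=> Xz; exists (g * z * g^-1) => //; rewrite !mulgA mulVg mul1g mulgVK.
Qed.

Lemma conjsetI X Y g : conjset (X `&` Y) g = conjset X g `&` conjset Y g.
Proof.
apply/seteqP; split => z; first by move=> /conjsetE [? ?]; split; apply/conjsetE.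
by move=> [/conjsetE ? /conjsetE ?]; apply/conjsetE.
Qed.

Lemma conjsetK X g h : conjset (conjset X g) h = conjset X (g * h).
Proof.
apply/seteqP; split => z; rewrite conjsetE conjsetE conjsetE invgM !mulgA //.
Qed.

Lemma conjset1 X : conjset X 1 = X.
Proof. by apply/seteqP; split => z; rewrite conjsetE invg1 mulg1 mul1g. Qed.

Lemma conjset_inj X Y g : conjset X g = conjset Y g -> X = Y.
Proof.
by move=> e; rewrite -(conjset1 X) -(conjset1 Y) -(mulgV g) -!conjsetK e.
Qed.

Lemma conjset_lcoset x Y g :
  conjset (lcoset x Y) g = lcoset (g^-1 * x * g) (conjset Y g).
Proof.
apply/seteqP; split => z.
  move=> [_ [y Yy <-] <-]; exists (g^-1 * y * g); first by exists y.
  by rewrite !mulgA mulgK.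
move=> [_ [y Yy <-] <-]; exists (x * y); first by exists y.
by rewrite !mulgA mulgK.
Qed.

Lemma subgroup_conj X g : is_subgroup X -> is_subgroup (conjset X g).
Proof.
case=> X1 XM XV; split.
- by apply/conjsetE; rewrite mulg1 mulgV.
- move=> x y /conjsetE Hx /conjsetE Hy; apply/conjsetE.
  by have := XM _ _ Hx Hy; rewrite !mulgA mulgVK.
- move=> x /conjsetE Hx; apply/conjsetE.
  by have := XV _ Hx; rewrite !invgM invgK !mulgA.
Qed.

Lemma index_conj X Y g : finite_set (cosets X Y) ->
  subgroup_index (conjset X g) (conjset Y g) = subgroup_index X Y.
Proof.
move=> fin; rewrite !subgroup_indexE.
have -> : cosets (conjset X g) (conjset Y g) = (fun Z => conjset Z g) @` cosets X Y.
  apply/seteqP; split => W.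
    move=> [_ [x Xx <-] <-]; exists (lcoset x Y); first by exists x.
    by rewrite conjset_lcoset.
  move=> [_ [x Xx <-] <-]; exists (g^-1 * x * g); first by exists x.
  by rewrite conjset_lcoset.
rewrite fset_set_image // card_in_imfset //.
by move=> ? ? _ _; apply: conjset_inj.
Qed.

End Conjugation.

Section CompactOpen.
Variable G : topGroupType.
Implicit Types (X Y Z : set G) (g x : G).

Lemma translate_continuous (a b : G) : continuous (fun x : G => a * x * b).
Proof.
move=> x.
have left_cvg : (fun y : G => a * y) @ x --> a * x.
  apply: (@continuous2_cvg _ _ _ _ _ _ (fun=> a) id (fun u v => u * v)).
  - exact: (@mul_continuous G (a, x)).
  - exact: cvg_cst.
  - exact: cvg_id.
apply: (@continuous2_cvg _ _ _ _ _ _ (fun y => a * y) (fun=> b) (fun u v => u * v)).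
- exact: (@mul_continuous G (a * x, b)).
- exact: left_cvg.
- exact: cvg_cst.
Qed.

Lemma open_translate (a b : G) X : open X -> open ((fun x => a * x * b) @^-1` X).
Proof. by move=> oX; apply: open_comp => // y _; apply: translate_continuous. Qed.

Lemma lcoset_open x X : open X -> open (lcoset x X).
Proof.
move=> oX; have -> : lcoset x X = (fun y => x^-1 * y * 1) @^-1` X.
  apply/seteqP; split => y; first by move=> [z Xz <-]; rewrite /= mulg1 mulKg.
  by move=> /= Xy; exists (x^-1 * y * 1) => //; rewrite mulg1 mulVKg.
exact: open_translate.
Qed.

Lemma conjset_open X g : open X -> open (conjset X g).
Proof.
move=> oX; have -> : conjset X g = (fun z => g * z * g^-1) @^-1` X.
  by apply/seteqP; split => z /conjsetE.
exact: open_translate.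
Qed.

Lemma conjset_compact X g : compact X -> compact (conjset X g).
Proof.
move=> cX; apply: continuous_compact => //.
by apply: continuous_subspaceT; apply: translate_continuous.
Qed.

Lemma cop_conj X g : compact_open_subgroup X -> compact_open_subgroup (conjset X g).
Proof.
case=> sX cX oX.
by split; [exact: subgroup_conj|exact: conjset_compact|exact: conjset_open].
Qed.

(* The open-cover characterization of compactness is stated for pointed
   spaces; G is pointed by its identity. *)
Definition pointedG : Type := G.
HB.instance Definition _ := Topological.on pointedG.
HB.instance Definition _ := isPointed.Build pointedG (1 : G).

Lemma compact_cover_compact X : compact X -> cover_compact X.
Proof. by move=> cX; have : @compact pointedG X by []; rewrite compact_cover. Qed.

(* the cosets of an open subgroup form an open cover, so a compact set meets
   only finitely many of them *)
Lemma finite_cosets X Y : compact X -> is_subgroup Y -> open Y ->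
  finite_set (cosets X Y).
Proof.
move=> cX sY oY.
have [|x Xx|D _ cov] := @compact_cover_compact X cX G X (fun x => lcoset x Y).
- by move=> x _; apply: lcoset_open.
- by exists x => //; apply: lcoset_self.
apply: (@sub_finite_set _ _ ((fun x => lcoset x Y) @` [set` D])).
  by move=> _ [x Xx <-]; have [y Dy xy] := cov x Xx; exists y => //; apply: lcoset_eq.
by apply: finite_image; apply: finite_fset.
Qed.

Lemma finite_cosets_cop X Y : compact_open_subgroup X -> is_subgroup Y -> open Y ->
  finite_set (cosets X Y).
Proof. by case=> _ cX _; apply: finite_cosets. Qed.

Lemma cop_meet X Y : compact_open_subgroup X -> compact_open_subgroup Y ->
  is_subgroup (X `&` Y) /\ open (X `&` Y).
Proof. by case=> sX _ oX [sY _ oY]; split; [apply: subgroupI|apply: openI]. Qed.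

Lemma meet_index_gt0 X Y : compact_open_subgroup X -> compact_open_subgroup Y ->
  (0 < meet_index X Y)%N.
Proof.
move=> cX cY; have [sXY oXY] := cop_meet cX cY.
by case: (cX) => sX _ _; apply: index_gt0 sX (finite_cosets_cop cX sXY oXY).
Qed.

Lemma meet_index_conj X Y g : compact_open_subgroup X -> compact_open_subgroup Y ->
  meet_index (conjset X g) (conjset Y g) = meet_index X Y.
Proof.
move=> cX cY; have [sXY oXY] := cop_meet cX cY.
by rewrite /meet_index -conjsetI index_conj //; apply: finite_cosets_cop.
Qed.

Lemma meet_index_conjC X g : compact_open_subgroup X ->
  meet_index (conjset X g) X = displacement g^-1 X.
Proof.
move=> cX; rewrite -(meet_index_conj g^-1 (cop_conj g cX) cX).
by rewrite conjsetK mulgV conjset1.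
Qed.

Lemma meet_index_cocycle X Y Z : compact_open_subgroup X ->
  compact_open_subgroup Y -> compact_open_subgroup Z ->
  (meet_index X Y * meet_index Y Z * meet_index Z X =
   meet_index Y X * meet_index Z Y * meet_index X Z)%N.
Proof.
move=> cX cY cZ; have [sX _ _] := cX; have [sY _ _] := cY; have [sZ _ _] := cZ.
set D := X `&` Y `&` Z.
have [sXY oXY] := cop_meet cX cY; have [_ _ oZ] := cZ.
have sD : is_subgroup D := subgroupI sXY sZ.
have oD : open D := openI oXY oZ.
have fin W : compact_open_subgroup W -> finite_set (cosets W D).
  by move=> cW; apply: finite_cosets_cop.
have pXY := meet_index_pair sX sY sD (fun z '(conj XYz _) => XYz) (fin _ cX) (fin _ cY).
have pYZ := meet_index_pair sY sZ sD (fun z '(conj (conj _ Yz) Zz) => conj Yz Zz)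
  (fin _ cY) (fin _ cZ).
have pZX := meet_index_pair sZ sX sD (fun z '(conj (conj Xz _) Zz) => conj Zz Xz)
  (fin _ cZ) (fin _ cX).
have := index_gt0 sX (fin _ cX); have := index_gt0 sY (fin _ cY).
have := index_gt0 sZ (fin _ cZ).
set dX := subgroup_index X D in pXY pZX *; set dY := subgroup_index Y D in pXY pYZ *.
set dZ := subgroup_index Z D in pYZ pZX * => dZ_gt0 dY_gt0 dX_gt0.
apply/eqP; rewrite -(@eqn_pmul2r (dX * dY * dZ)) ?muln_gt0 ?dX_gt0 ?dY_gt0 //.
apply/eqP; transitivity ((meet_index X Y * dY) * (meet_index Y Z * dZ) *
  (meet_index Z X * dX))%N; first ring.
by rewrite pXY pYZ pZX; ring.
Qed.

Lemma displacementE g X : displacement g X = meet_index X (conjset X g).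
Proof. by []. Qed.

Lemma displacement_ratio g U W : compact_open_subgroup U -> compact_open_subgroup W ->
  (displacement g U * displacement g^-1 W = displacement g^-1 U * displacement g W)%N.
Proof.
move=> cU cW; have cUg := cop_conj g cU; have cWg := cop_conj g cW.
rewrite -!meet_index_conjC // !displacementE.
set V := conjset U g; set W' := conjset W g.
have c1 := meet_index_cocycle cU cUg cWg.
rewrite !meet_index_conj // -/V -/W' in c1.
have c2 := meet_index_cocycle cU cW cWg; rewrite -/W' in c2.
have pos : (0 < meet_index U W * meet_index W' U)%N.
  by rewrite muln_gt0 !meet_index_gt0.
apply/eqP; rewrite -(eqn_pmul2r pos); apply/eqP.
transitivity (meet_index W' W *
  (meet_index U V * meet_index U W * meet_index W' U))%N; first ring.
rewrite c1; transitivity (meet_index V U *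
  (meet_index W U * meet_index W' W * meet_index U W'))%N; first ring.
by rewrite -c2; ring.
Qed.

End CompactOpen.

Lemma scaleP (G : topGroupType) (g : G) (U : set G) : compact_open_subgroup U ->
  (exists2 W, compact_open_subgroup W & scale g = displacement g W) /\
  (forall V, compact_open_subgroup V -> (scale g <= displacement g V)%N).
Proof.
move=> cU; have exU : exists n, scale_pred g n.
  by exists (displacement g U); apply/asboolP; exists U.
rewrite /scale; case: pselect => [h|/(_ exU) []].
case: ex_minnP => n /asboolP [W [cW ->]] n_min.
by split=> [|V cV]; [exists W|apply: n_min; apply/asboolP; exists V].
Qed.

Theorem corollary4p12 (G : topGroupType) (g : G) (U : set G) :
  tdlc G ->
  compact_open_subgroup U ->
  coprime (subgroup_index U (setI U (conjset U g))) (subgroup_index U (setI U (conjset U g^-1))) ->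
  tidy g U /\ scale g = subgroup_index U (setI U (conjset U g)).
Proof.
move=> _ cU coprime_dU.
have [[W cW scaleW] scale_min] := scaleP g cU.
(* d(U) divides d'(U) d(W) = d(U) d'(W), hence divides d(W) = s(g) *)
have dvd_dW : (displacement g U %| displacement g W)%N.
  by rewrite -(Gauss_dvdr _ coprime_dU) -(displacement_ratio g cU cW) dvdn_mulr.
have scaleU : scale g = displacement g U.
  apply/eqP; rewrite eqn_leq scale_min //= scaleW dvdn_leq //.
  exact: meet_index_gt0 (cop_conj g cW).
by split; first split.
Qed.
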